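(* Let $T$ be the $H_3(\mathbb R)$-odometer associated with a nested sequence $\Gamma_1\supset\Gamma_2\supset\cdots$ of lattices in $H_3(\mathbb R)$. Then $T$ is free if and only if $\{c(t):t\in\mathbb R\}\cap\bigcap_{n=1}^\infty\Gamma_n=\{1\}$.
   Context: $H_3(\mathbb R)$: real $3\times3$ upper triangular unipotent matrices; $c(t)$ is the matrix with $(1,3)$ entry $t$ and other off-diagonal entries $0$, so $\{c(t)\}$ is the center. A lattice is a discrete subgroup of finite covolume. The $H_3(\mathbb R)$-odometer associated with the sequence is the left-translation action on $X=\varprojlim H_3(\mathbb R)/\Gamma_j$ with the invariant probability $\mu$ which is the inverse limit of the invariant probabilities on $H_3(\mathbb R)/\Gamma_j$. The action is free if for $\mu$-a.e. $x$ the stability group $\{g:T_gx=x\}$ is trivial. *)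

From HB Require Import structures.
From mathcomp Require Import all_boot all_order all_algebra.
From mathcomp Require Import all_classical all_reals all_analysis.
Set Implicit Arguments. Unset Strict Implicit. Unset Printing Implicit Defensive.
Import Order.TTheory GRing.Theory Num.Theory.
Local Open Scope classical_set_scope.
Local Open Scope ring_scope.

(* The Heisenberg group H_3(R), in matrix-entry coordinates:
   ((a, b), c) stands for the matrix [[1, a, c], [0, 1, b], [0, 0, 1]].
   The group law below is exactly matrix multiplication in these coordinates. *)
Definition H3 (R : realType) := ((R * R) * R)%type.

Definition h3mul {R : realType} (x y : H3 R) : H3 R :=
  ((x.1.1 + y.1.1, x.1.2 + y.1.2), x.2 + y.2 + x.1.1 * y.1.2).

Definition h3one {R : realType} : H3 R := ((0, 0), 0).

Definition h3inv {R : realType} (x : H3 R) : H3 R :=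
  ((- x.1.1, - x.1.2), - x.2 + x.1.1 * x.1.2).

Definition hc {R : realType} (t : R) : H3 R := ((0, 0), t).

(* Haar measure of H_3(R): Lebesgue measure in the coordinates (a, b, c)
   (the group law has Jacobian 1 on both sides). *)
Definition haar3 {R : realType} :=
  product_measure1 (product_measure1 (@lebesgue_measure R) (@lebesgue_measure R)) (@lebesgue_measure R).

Definition is_subgroup {R : realType} (G : set (H3 R)) : Prop :=
  G h3one /\ (forall x y, G x -> G y -> G (h3mul x y)) /\
  (forall x, G x -> G (h3inv x)).

Definition is_discrete {R : realType} (G : set (H3 R)) : Prop :=
  forall g, G g -> exists2 e : R, 0 < e & forall h, G h ->
    `|h.1.1 - g.1.1| < e -> `|h.1.2 - g.1.2| < e -> `|h.2 - g.2| < e -> h = g.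

Definition fundamental_domain {R : realType} (G : set (H3 R)) (F : set (H3 R)) :=
  measurable F /\ forall g : H3 R, exists! gam, G gam /\ F (h3mul g gam).

Definition finite_covolume {R : realType} (G : set (H3 R)) : Prop :=
  exists F, fundamental_domain G F /\ (haar3 F < +oo)%E.

Definition lattice {R : realType} (G : set (H3 R)) : Prop :=
  [/\ is_subgroup G, is_discrete G & finite_covolume G].

Definition coset {R : realType} (g : H3 R) (G : set (H3 R)) : set (H3 R) :=
  h3mul g @` G.

(* points of the inverse limit  X = lim H_3(R)/Gam_j : compatible sequences
   of cosets x_j in H/Gam_j, with x_{j+1} mapped to x_j. *)
Definition odo_point {R : realType} (Gam : nat -> set (H3 R))
    (x : nat -> set (H3 R)) : Prop :=
  (forall j, exists g, x j = coset g (Gam j)) /\ (forall j, x j.+1 `<=` x j).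

Definition odo_set {R : realType} (Gam : nat -> set (H3 R)) :
  set (nat -> set (H3 R)) := [set x | odo_point Gam x].

Definition cyl {R : realType} (Gam : nat -> set (H3 R)) (j : nat)
    (A : set (H3 R)) : set (nat -> set (H3 R)) :=
  [set x | odo_point Gam x /\ exists g, A g /\ x j = coset g (Gam j)].

Definition cylinders {R : realType} (Gam : nat -> set (H3 R)) :
  set (set (nat -> set (H3 R))) :=
  [set C | exists j A, measurable A /\ C = cyl Gam j A].

(* the measurable space carrying X (Borel sigma-algebra of the inverse limit,
   generated by the cylinders); X itself is the measurable set odo_set Gam *)
Definition odo_space {R : realType} (Gam : nat -> set (H3 R)) :=
  g_sigma_algebraType (cylinders Gam).

Definition odo_act {R : realType} (g : H3 R) (x : nat -> set (H3 R)) :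
  nat -> set (H3 R) := fun j => h3mul g @` x j.

Definition odo_free {R : realType} (Gam : nat -> set (H3 R))
    (mu : probability (odo_space Gam) R) : Prop :=
  {ae mu, forall x : odo_space Gam, odo_set Gam x ->
     forall g : H3 R, odo_act g x = x -> g = h3one}.

From HB Require Import structures.
From mathcomp Require Import all_boot all_order all_algebra.
From mathcomp Require Import all_classical all_reals all_analysis.
From mathcomp Require Import ring lra measurable_realfun.
Import Order.TTheory GRing.Theory Num.Theory.
Local Open Scope classical_set_scope.
Local Open Scope ring_scope.

(* A point x = (h_j Gam_j)_j of the odometer is fixed by g exactly when every
   conjugate h_j^-1 g h_j lies in Gam_j. Hence a central element of all the
   Gam_n fixes every point, and freeness forces the intersection with the
   centre to be trivial.
   Conversely, write g = (v, s). If v = 0, then g = c(s) is central and lies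
   in every Gam_n, so g = 1. If v <> 0, the conjugation formula
   h^-1 (v, s) h = (v, s + omega(v, h)), with omega = [sympl] the pairing of
   horizontal parts, puts every h_j in a band {h | omega(v, h) is within |s| of
   the centre coordinate of some (v, _) in Gam_j}. As the centre of Gam_0 is
   uniformly discrete and meets the centre of all Gam_n only in 1, the centre
   of Gam_k has no nonzero element in [-L, L] once k is large; then N translates
   of the level-k cylinder of the band are pairwise disjoint, and translation
   invariance gives it measure at most 1/N. Countably many choices of (v, |s|)
   cover all points with a nontrivial stabiliser. *)

Lemma nonincreasing_subset {T} {F : nat -> set T} : (forall n, F n.+1 `<=` F n) ->
  {homo F : m n / (m <= n)%N >-> n `<=` m}.
Proof.
by apply: homo_leq => [A|B A C BA CB]; [exact: subset_refl | exact: subset_trans CB BA].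
Qed.

Section SeparatedNonincreasing.
Context {R : realType} {Z : nat -> set R} {e : R}.
Hypotheses (e_gt0 : 0 < e) (Z_dec : forall n, Z n.+1 `<=` Z n)
  (Z0_sep : forall d d', Z 0 d -> Z 0 d' -> `|d - d'| < e -> d = d')
  (Z_cap : forall d, (forall n, Z n d) -> d = 0).

Lemma separated_eventually_window (a : R) :
  exists k, forall d, Z k d -> a <= d -> d < a + e -> d = 0.
Proof.
apply: contrapT => /forallNP no_k.
have nz k : exists d, [/\ Z k d, a <= d, d < a + e & d != 0].
  apply: contrapT => /forallNP no_d; apply: (no_k k) => d Zd ad da.
  by apply: contrapT => /eqP dn0; apply: (no_d d).
have [d0 [Zd0 ad0 d0a /eqP d0n0]] := nz 0%N.
apply: d0n0; apply: Z_cap => k.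
have [dk [Zdk adk dka _]] := nz k.
have -> : d0 = dk; last exact: Zdk.
apply: Z0_sep => //; first exact: nonincreasing_subset Z_dec _ _ (leq0n k) _ Zdk.
by rewrite ltr_distl; apply/andP; split; lra.
Qed.

Lemma separated_eventually_interval (n : nat) (a : R) :
  exists k, forall d, Z k d -> a <= d -> d < a + n%:R * e -> d = 0.
Proof.
elim: n a => [|n IH] a.
  by exists 0%N => d _; rewrite mul0r addr0; lra.
have [k1 Hk1] := separated_eventually_window a.
have [k2 Hk2] := IH (a + e).
have Zmono := nonincreasing_subset Z_dec.
exists (maxn k1 k2) => d Zd ad da.
have [dl|dg] := ltP d (a + e).
  by apply: Hk1 => //; exact: Zmono (leq_maxl k1 k2) _ Zd.
apply: Hk2 => //; first exact: Zmono (leq_maxr k1 k2) _ Zd.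
by move: da; rewrite -natr1 mulrDl mul1r; lra.
Qed.

Lemma separated_eventually_ball (L : R) :
  exists k, forall d, Z k d -> `|d| <= L -> d = 0.
Proof.
have L0 : 0 <= 2 * `|L| / e by apply: divr_ge0; [rewrite mulr_ge0 | exact: ltW].
have := archi_boundP L0; rewrite ltr_pdivrMr // => Le.
have [k Hk] := separated_eventually_interval (Num.bound (2 * `|L| / e)) (- L).
exists k => d Zd; rewrite ler_norml => /andP [Ld dL]; apply: Hk => //.
by have := ler_norm L; lra.
Qed.

End SeparatedNonincreasing.

Lemma natr_dist_bounds (R : realDomainType) {i j N : nat} :
  (i < N)%N -> (j < N)%N -> i != j -> 1 <= `|i%:R - j%:R : R| <= N%:R - 1.
Proof.
move=> iN jN nij.
suff gap a b : (a < b)%N -> (b < N)%N -> 1 <= `|b%:R - a%:R : R| <= N%:R - 1.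
  case: (ltngtP i j) => [ij|ji|ij]; last by rewrite ij eqxx in nij.
  - by rewrite distrC; exact: gap.
  - exact: gap.
move=> ab bN; have ab' : a%:R + 1 <= b%:R :> R by rewrite natr1 ler_nat.
have bN' : b%:R + 1 <= N%:R :> R by rewrite natr1 ler_nat.
have := ler0n R a; rewrite ger0_norm => [a0|]; first by apply/andP; split; lra.
by rewrite subr_ge0 ler_nat ltnW.
Qed.

Lemma exists_rat_near {R : realType} (x : R) {p : R} :
  0 < p -> exists q : rat, `|x - ratr q| < p.
Proof.
move=> p_gt0; have : x - p < x + p by lra.
case/rat_in_itvoo => q; rewrite in_itv /= => /andP [xq qx]; exists q.
by rewrite ltr_distl; apply/andP; split; lra.
Qed.

Lemma countable_bigcup_nat {I T} {D : set I} (F : I -> set T) : countable D ->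
  exists H : nat -> set T, \bigcup_(i in D) F i = \bigcup_n H n /\
    forall n, H n = set0 \/ exists2 i, D i & H n = F i.
Proof.
case/countable_injP => f f_inj.
exists (fun n => \bigcup_(i in D `&` f @^-1` [set n]) F i); split.
  apply/seteqP; split => x; first by case=> i Di Fx; exists (f i) => //; exists i.
  by case=> n _ [i [Di _] Fx]; exists i.
move=> n; have [[i [Di fi]]|none] := pselect (exists i, D i /\ f i = n).
  right; exists i => //; rewrite (_ : _ `&` _ = [set i]) ?bigcup_set1 //.
  apply/seteqP; split => [j [Dj fj]|j ->] //.
  by apply: f_inj; rewrite ?inE //= fj fi.
left; rewrite (_ : _ `&` _ = set0) ?bigcup_set0 //.
by apply/seteqP; split => // j [Dj fj]; apply: none; exists j.
Qed.

Lemma countable_bigcup_measurable d (T : measurableType d) I (D : set I)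
    (F : I -> set T) : countable D -> (forall i, D i -> measurable (F i)) ->
  measurable (\bigcup_(i in D) F i).
Proof.
move=> /(countable_bigcup_nat F) [H [-> HF]] mF; apply: bigcupT_measurable => n.
by case: (HF n) => [->|[i Di ->]]; [exact: measurable0 | exact: mF].
Qed.

Lemma negligible_countable_bigcup d (T : measurableType d) (R : realType)
    (mu : {measure set T -> \bar R}) I (D : set I) (F : I -> set T) :
  countable D -> (forall i, D i -> mu.-negligible (F i)) ->
  mu.-negligible (\bigcup_(i in D) F i).
Proof.
move=> /(countable_bigcup_nat F) [H [-> HF]] nF; apply: negligible_bigcup => n.
by case: (HF n) => [->|[i Di ->]]; [exact: negligible_set0 | exact: nF].
Qed.

Lemma probability_eq0_of_disjoint_majorants d (T : measurableType d) (R : realType)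
    (P : probability T R) (B : set T) :
  (forall N, exists F : 'I_N -> set T,
     [/\ forall i, measurable (F i), trivIset setT F & forall i, (P B <= P (F i))%E]) ->
  P B = 0%E.
Proof.
move=> majorants.
have sum_le1 N : (\sum_(i < N) P B <= 1)%E.
  have [F [mF tF PBF]] := majorants N.
  apply: le_trans (_ : P (\big[setU/set0]_(i < N) F i) <= 1)%E.
    by rewrite measure_bigsetU_ord //; apply: lee_sum => i _; exact: PBF.
  by rewrite probability_le1 //; apply: bigsetU_measurable.
have PB_fin : P B \is a fin_num.
  rewrite ge0_fin_numE // (le_lt_trans _ (ltry 1)) //.
  by have := sum_le1 1%N; rewrite big_ord1.
rewrite -(fineK PB_fin) in sum_le1 *; congr (_%:E).
have b_ge0 : 0 <= fine (P B) by rewrite fine_ge0.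
apply/eqP; rewrite eq_le b_ge0 andbT leNgt; apply/negP => b_gt0.
have /archi_boundP : 0 <= (fine (P B))^-1 by rewrite invr_ge0.
set N := Num.bound _ => bN.
have := sum_le1 N; rewrite sumEFin sumr_const card_ord lee_fin -mulr_natr.
by rewrite -ler_pdivlMl // mulr1 leNgt bN.
Qed.

Section Heisenberg.
Context {R : realType}.
Implicit Types (g h x y : H3 R) (G : set (H3 R)) (v : R * R) (t : R).

Definition sympl v h : R := v.1 * h.1.2 - v.2 * h.1.1.

Lemma sympl_mul v x y : sympl v (h3mul x y) = sympl v x + sympl v y.
Proof. by rewrite /sympl /=; ring. Qed.

Lemma h3mulg1 g : h3mul g h3one = g.
Proof. by case: g => [[a b] c]; rewrite /h3mul /=; congr (_, _, _); ring. Qed.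

Lemma h3mulKg g x : h3mul (h3inv g) (h3mul g x) = x.
Proof.
by case: g x => [[a b] c] [[x y] z]; rewrite /h3mul /h3inv /=; congr (_, _, _); ring.
Qed.

Lemma h3mulKVg g x : h3mul g (h3mul (h3inv g) x) = x.
Proof.
by case: g x => [[a b] c] [[x y] z]; rewrite /h3mul /h3inv /=; congr (_, _, _); ring.
Qed.

Lemma h3conjE g h : h3mul (h3inv h) (h3mul g h) = (g.1, g.2 + sympl g.1 h).
Proof.
by case: g h => [[a b] c] [[x y] z]; rewrite /h3mul /h3inv /sympl /=; congr (_, _, _); ring.
Qed.

Lemma h3divE v a b : h3mul (h3inv (v, a)) (v, b) = hc (b - a).
Proof. by case: v => x y; rewrite /h3mul /h3inv /hc /=; congr (_, _, _); ring. Qed.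

Lemma subgroup_conj {G g h} : is_subgroup G -> G g -> G h ->
  G (h3mul (h3inv h) (h3mul g h)).
Proof. by move=> [_ [GM GV]] Gg Gh; exact: GM (GV _ Gh) (GM _ _ Gg Gh). Qed.

Lemma subgroup_div {G x y} : is_subgroup G -> G x -> G y -> G (h3mul (h3inv x) y).
Proof. by move=> [_ [GM GV]] Gx Gy; exact: GM (GV _ Gx) Gy. Qed.

Lemma coset_eqP {G g h} : is_subgroup G -> coset g G = coset h G ->
  exists2 gam, G gam & h = h3mul g gam.
Proof.
move=> [G1 _] eq_gh.
have : coset h G h by exists h3one; rewrite ?h3mulg1.
by rewrite -eq_gh => -[gam Ggam <-]; exists gam.
Qed.

Lemma coset_stab_conj {G g h} : is_subgroup G -> h3mul g @` coset h G = coset h G ->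
  G (g.1, g.2 + sympl g.1 h).
Proof.
move=> [G1 _] fix_gh; rewrite -h3conjE.
have : coset h G (h3mul g h).
  by rewrite -fix_gh; exists h => //; exists h3one; rewrite ?h3mulg1.
by case=> gam Ggam <-; rewrite h3mulKg.
Qed.

Lemma hc_stab_coset {G t} h : is_subgroup G -> G (hc t) ->
  h3mul (hc t) @` coset h G = coset h G.
Proof.
move=> [_ [GM GV]] Gt; apply/seteqP; split => y.
- case=> _ [gam Ggam <-] <-; exists (h3mul (hc t) gam); first exact: GM.
  by rewrite /h3mul /hc /=; congr (_, _, _); ring.
- case=> gam Ggam <-; exists (h3mul h (h3mul (h3inv (hc t)) gam)).
    by exists (h3mul (h3inv (hc t)) gam) => //; apply: GM => //; apply: GV.
  by rewrite /h3mul /h3inv /hc /=; congr (_, _, _); ring.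
Qed.

Lemma exists_sympl {v} r : v != (0, 0) -> exists w, sympl v w = r.
Proof.
case: v => a b nv; have [a0|an0] := eqVneq a 0.
  have bn0 : b != 0 by apply: contraNneq nv => ->; rewrite a0.
  by exists ((- r / b, 0), 0); rewrite /sympl /=; field.
by exists ((0, r / a), 0); rewrite /sympl /=; field.
Qed.

End Heisenberg.

(* Each point of a discrete set is coded by a rational box around it, small
   enough that the doubled box meets the set in that point only. *)
Lemma discrete_countable {R : realType} {G : set (H3 R)} : is_discrete G -> countable G.
Proof.
move=> disc; apply/countable_injP.
pose box g (b : rat * rat * rat * rat) := G g ->
  [/\ `|g.1.1 - ratr b.1.1.1| < ratr b.2, `|g.1.2 - ratr b.1.1.2| < ratr b.2,
      `|g.2 - ratr b.1.2| < ratr b.2 &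
      forall h, G h -> `|h.1.1 - g.1.1| < ratr b.2 *+ 2 ->
        `|h.1.2 - g.1.2| < ratr b.2 *+ 2 -> `|h.2 - g.2| < ratr b.2 *+ 2 -> h = g].
have /choice [f boxf] : forall g, exists b, box g b.
  move=> g; have [Gg|nGg] := pselect (G g); last by exists (0, 0, 0, 0).
  have [e e_gt0 He] := disc g Gg.
  have : 0 < e / 2 by lra.
  case/rat_in_itvoo => p; rewrite in_itv /= => /andP [p_gt0 pe].
  have [q1 h1] := exists_rat_near g.1.1 p_gt0.
  have [q2 h2] := exists_rat_near g.1.2 p_gt0.
  have [q3 h3] := exists_rat_near g.2 p_gt0.
  exists (q1, q2, q3, p) => _; split => // h Gh d1 d2 d3.
  by apply: He => //; apply: lt_le_trans (_ : ratr p *+ 2 <= e) => //; lra.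
exists (pickle \o f) => g g' /set_mem Gg /set_mem Gg' /= /(pcan_inj pickleK) fgg'.
have [a1 a2 a3 Hg] := boxf g Gg; have [b1 b2 b3 _] := boxf g' Gg'.
rewrite fgg' in a1 a2 a3 Hg; symmetry; apply: Hg => //; rewrite mulr2n.
- by have := ler_distD (ratr (f g').1.1.1) g'.1.1 g.1.1; rewrite (distrC g.1.1) in a1; lra.
- by have := ler_distD (ratr (f g').1.1.2) g'.1.2 g.1.2; rewrite (distrC g.1.2) in a2; lra.
- by have := ler_distD (ratr (f g').1.2) g'.2 g.2; rewrite (distrC g.2) in a3; lra.
Qed.

Lemma discrete_center_separated {R : realType} {G : set (H3 R)} :
  is_subgroup G -> is_discrete G ->
  exists2 e : R, 0 < e & forall d d', G (hc d) -> G (hc d') -> `|d - d'| < e -> d = d'.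
Proof.
move=> G_sub disc; have [e e_gt0 isolated1] := disc _ G_sub.1.
exists e => // d d' Gd Gd' dd'.
have := subgroup_div G_sub Gd' Gd; rewrite /hc h3divE => /isolated1.
rewrite /hc /h3one /= !subrr normr0 subr0 => /(_ e_gt0 e_gt0 dd') [].
by move/eqP; rewrite subr_eq0 => /eqP.
Qed.

Section Band.
Context {R : realType}.
Implicit Types (G : set (H3 R)) (v : R * R) (M r : R).

(* [band G v M 0] contains every h such that some (v, s) with |s| <= M fixes the
   coset hG; the shift r is left translation by any w with [sympl v w = r]. *)
Definition band G v M r : set (H3 R) :=
  [set h | exists2 gam, G gam /\ gam.1 = v & `|gam.2 - (sympl v h - r)| <= M].

Lemma sympl_measurable v : measurable_fun setT (sympl v).
Proof.
apply: measurable_funB; apply: measurable_funM; try exact: measurable_cst.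
- exact: measurableT_comp measurable_snd measurable_fst.
- exact: measurableT_comp measurable_fst measurable_fst.
Qed.

Lemma band_measurable G v M r : countable G -> measurable (band G v M r).
Proof.
move=> G_countable.
have -> : band G v M r = (fun h => sympl v h - r) @^-1`
    \bigcup_(gam in G `&` [set gam | gam.1 = v]) `[gam.2 - M, gam.2 + M]%classic.
  apply/seteqP; split => h /=.
  - by case=> gam Ggam gam_near; exists gam => //=; rewrite in_itv /= -ler_distlC.
  - by case=> gam Ggam /=; rewrite in_itv /= -ler_distlC; exists gam.
rewrite -[X in measurable X]setTI; apply: measurable_funB.
- exact: sympl_measurable.
- exact: measurable_cst.
- exact: measurableT.
apply: countable_bigcup_measurable => [|gam _]; last exact: measurable_itv.
exact: sub_countable (subset_card_le (@subIsetl _ _ _)) G_countable.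
Qed.

Lemma band_translate {G v M r w} : sympl v w = r ->
  h3mul w @` band G v M 0 = band G v M r.
Proof.
move=> <-; apply/seteqP; split => [_ [h [gam Ggam near] <-]|h [gam Ggam near]].
  exists gam => //; rewrite sympl_mul.
  by have -> : sympl v w + sympl v h - sympl v w = sympl v h - 0 by ring.
exists (h3mul (h3inv w) h); last exact: h3mulKVg.
exists gam => //.
by have -> : sympl v (h3mul (h3inv w) h) - 0 = sympl v h - sympl v w
  by rewrite /sympl /h3inv /=; ring.
Qed.

Lemma coset_stab_band {G g h} M : is_subgroup G ->
  h3mul g @` coset h G = coset h G -> `|g.2| <= M -> band G g.1 M 0 h.
Proof.
move=> G_sub fix_gh gM; exists (g.1, g.2 + sympl g.1 h); last by rewrite subr0 addrK.
by split => //; exact: coset_stab_conj.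
Qed.

End Band.

Section OdometerCylinders.
Context {R : realType} (Gam : nat -> set (H3 R)).
Implicit Types (v : R * R) (M r : R).

Lemma cyl_measurable j A : measurable A -> measurable (cyl Gam j A : set (odo_space Gam)).
Proof. by move=> mA; apply: sub_sigma_algebra; exists j, A. Qed.

(* A common point yields (v, s), (v, s') in Gam k and gam in Gam k such that
   (v, s') and the conjugate of (v, s) by gam differ by a central element of
   Gam k lying within 2M of r' - r. *)
Lemma cyl_band_disjoint k v M r r' : is_subgroup (Gam k) ->
  (forall t, Gam k (hc t) -> `|t| <= `|r - r'| + 2 * M -> t = 0) ->
  2 * M < `|r - r'| ->
  cyl Gam k (band (Gam k) v M r) `&` cyl Gam k (band (Gam k) v M r') = set0.
Proof.
move=> Gk_sub small_center far; apply/seteqP; split => // x.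
move=> [[_ [g [[[v1 s] [Gs /= v1E] near] xg]]] [_ [g' [[[v2 s'] [Gs' /= v2E] near'] xg']]]].
subst v1 v2.
have [gam Ggam g'E] := coset_eqP Gk_sub (etrans (esym xg) xg').
move: near'; rewrite /= g'E sympl_mul => near'.
have := subgroup_div Gk_sub (subgroup_conj Gk_sub Gs Ggam) Gs'.
rewrite h3conjE h3divE /= => /small_center center0.
have := ler_norm (r - r'); have := ler_norm (r' - r); rewrite distrC => rr1 rr2.
move: near near'; rewrite !ler_norml => /andP [n1 n2] /andP [n3 n4].
have /center0 : `|s' - (s + sympl v gam)| <= `|r - r'| + 2 * M.
  by rewrite ler_norml; apply/andP; split; lra.
by move: far; rewrite ltr_normr => /orP [] ?; lra.
Qed.

End OdometerCylinders.

Section BandNull.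
Context {R : realType} (Gam : nat -> set (H3 R)) (mu : probability (odo_space Gam) R).
Hypotheses (Gam_sub : forall n, is_subgroup (Gam n))
  (Gam_countable : forall n, countable (Gam n))
  (center_small : forall L : R, exists k, forall t, Gam k (hc t) -> `|t| <= L -> t = 0)
  (mu_inv : forall j g A, measurable A -> mu (cyl Gam j (h3mul g @` A)) = mu (cyl Gam j A)).

(* For every N, the cylinder over [band v M 0] has N pairwise disjoint
   translates, namely the cylinders over [band v M (i * (2M + 1))]. *)
Lemma bigcap_cyl_band_null v M : v != (0, 0) -> 0 <= M ->
  mu (\bigcap_k cyl Gam k (band (Gam k) v M 0)) = 0%E.
Proof.
move=> v_neq0 M_ge0; apply: probability_eq0_of_disjoint_majorants => N.
pose c := 2 * M + 1; have c_gt0 : 0 < c by rewrite /c; lra.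
have [k Hk] := center_small (N%:R * c).
exists (fun i : 'I_N => cyl Gam k (band (Gam k) v M (i%:R * c))); split.
- by move=> i; apply: cyl_measurable; apply: band_measurable.
- move=> i j _ _ [x Fijx]; apply/val_inj/eqP; apply: contraT => nij.
  have [dist1 distN] := andP (natr_dist_bounds R (ltn_ord i) (ltn_ord j) nij).
  have distE : `|i%:R * c - j%:R * c| = `|i%:R - j%:R : R| * c.
    by rewrite -mulrBl normrM (gtr0_norm c_gt0).
  move: Fijx; rewrite cyl_band_disjoint // distE /c; last by nra.
  by move=> t /Hk Hkt tle; apply: Hkt; apply: le_trans tle _; rewrite /c; nra.
- move=> i; have [w wE] := exists_sympl (i%:R * c) v_neq0.
  rewrite -(band_translate wE) mu_inv; last exact: band_measurable.
  apply: le_measure; rewrite ?inE; last by move=> x /(_ k I).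
  + by apply: bigcapT_measurable => n; apply: cyl_measurable; apply: band_measurable.
  + by apply: cyl_measurable; apply: band_measurable.
Qed.

End BandNull.

Lemma odo_act_center {R : realType} {Gam : nat -> set (H3 R)} {t x} :
  (forall n, is_subgroup (Gam n)) -> (forall n, Gam n (hc t)) -> odo_set Gam x ->
  odo_act (hc t) x = x.
Proof.
move=> Gam_sub Gt [x_coset _]; apply: funext => j; rewrite /odo_act.
by have [h ->] := x_coset j; exact: hc_stab_coset h (Gam_sub j) (Gt j).
Qed.

Section OdometerFreeness.
Context {R : realType} (Gam : nat -> set (H3 R)) (mu : probability (odo_space Gam) R).
Hypothesis Gam_sub : forall n, is_subgroup (Gam n).

Lemma odo_free_center_trivial : mu (odo_set Gam) = 1%E -> odo_free mu ->
  [set hc t | t in [set: R]] `&` \bigcap_n Gam n = [set h3one].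
Proof.
move=> mu_X [N [mN N0 free_off_N]]; apply/seteqP; split => [_ [[t _ <-] Gt]|_ ->].
  have [->|t_neq0] := eqVneq t 0 => //; exfalso.
  have X_N : odo_set Gam `<=` N.
    move=> x Xx; apply: free_off_N => /(_ Xx (hc t)).
    by move=> /(_ (odo_act_center Gam_sub (fun n => Gt n I) Xx)) [] /eqP; apply/negP.
  have X_cyl : odo_set Gam = cyl Gam 0 setT.
    apply/seteqP; split => x; last by case.
    by move=> Xx; split => //; have [g ->] := Xx.1 0%N; exists g.
  have : (mu (odo_set Gam) <= mu N)%E.
    by apply: le_measure; rewrite ?inE // X_cyl; exact: cyl_measurable.
  by rewrite mu_X N0 lee_fin ler10.
by split; [exists 0 | move=> n _; exact: (Gam_sub n).1].
Qed.

Hypotheses (Gam_disc : forall n, is_discrete (Gam n))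
  (Gam_dec : forall n, Gam n.+1 `<=` Gam n)
  (mu_inv : forall j g A, measurable A -> mu (cyl Gam j (h3mul g @` A)) = mu (cyl Gam j A)).

Lemma odo_stab_in_bands {x g} : (forall t, (forall n, Gam n (hc t)) -> t = 0) ->
  odo_set Gam x -> odo_act g x = x -> g <> h3one ->
  (\bigcup_(M : nat) \bigcup_(v in fst @` (Gam 0 `&` [set gam | gam.1 != (0, 0)]))
     \bigcap_k cyl Gam k (band (Gam k) v M%:R 0)) x.
Proof.
move=> center0 Xx gx g_neq1.
have stab j : exists2 h, x j = coset h (Gam j) & h3mul g @` coset h (Gam j) = coset h (Gam j).
  by have [h xj] := Xx.1 j; exists h; rewrite -?xj // -[in RHS]gx.
have g1_neq0 : g.1 != (0, 0).
  apply/eqP => g1_0; apply: g_neq1.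
  have g2_0 : g.2 = 0.
    apply: center0 => n; have [h _ /(coset_stab_conj (Gam_sub n))] := stab n.
    by rewrite g1_0 /sympl /= !mul0r subrr addr0.
  by rewrite [g]surjective_pairing g1_0 g2_0.
have [M gM] : exists M : nat, `|g.2| <= M%:R.
  by exists (Num.bound `|g.2|); exact/ltW/archi_boundP.
exists M => //; exists g.1.
  have [h _ fix0] := stab 0%N.
  by exists (g.1, g.2 + sympl g.1 h) => //; split => //; exact: coset_stab_conj fix0.
move=> k _; have [h xk fixk] := stab k; split => //.
by exists h; split => //; exact: coset_stab_band.
Qed.

Lemma center_trivial_odo_free :
  [set hc t | t in [set: R]] `&` \bigcap_n Gam n = [set h3one] -> odo_free mu.
Proof.
move=> center1.
have center0 t : (forall n, Gam n (hc t)) -> t = 0.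
  move=> Gt; suff : [set h3one] (hc t) by case.
  by rewrite -center1; split; [exists t | move=> n _; exact: Gt].
have [e e_gt0 sep] := discrete_center_separated (Gam_sub 0) (Gam_disc 0).
have center_small := separated_eventually_ball (Z := fun n => [set t | Gam n (hc t)]) e_gt0
  (fun n t => @Gam_dec n (hc t)) sep center0.
have Gam_countable n := discrete_countable (Gam_disc n).
pose V := fst @` (Gam 0 `&` [set gam | gam.1 != (0, 0)]).
apply: (@negligibleS _ _ _ mu
  (\bigcup_(M : nat) \bigcup_(v in V) \bigcap_k cyl Gam k (band (Gam k) v M%:R 0))).
  move=> x /= x_bad; apply: contrapT => x_good; apply: x_bad => Xx g gx.
  by apply: contrapT => g_neq1; exact: x_good (odo_stab_in_bands center0 Xx gx g_neq1).
apply: negligible_bigcup => M; apply: negligible_countable_bigcup.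
  apply: sub_countable (card_image_le _ _) _.
  exact: sub_countable (subset_card_le (@subIsetl _ _ _)) (Gam_countable 0).
move=> _ [gam [_ gam1] <-]; apply/negligibleP.
  by apply: bigcapT_measurable => k; apply: cyl_measurable; exact: band_measurable.
exact: bigcap_cyl_band_null.
Qed.

End OdometerFreeness.

Theorem theorem3p1 (R : realType) (Gam : nat -> set (H3 R))
  (hlat : forall n, lattice (Gam n))
  (hnest : forall n, Gam n.+1 `<=` Gam n)
  (mu : probability (odo_space Gam) R)
  (hX : mu (odo_set Gam) = 1%E)
  (hinv : forall (j : nat) (g : H3 R) (A : set (H3 R)), measurable A ->
     mu (cyl Gam j (h3mul g @` A)) = mu (cyl Gam j A)) :
  odo_free mu <->
  [set hc t | t in [set: R]] `&` \bigcap_n Gam n = [set h3one].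
Proof.
have Gam_sub n : is_subgroup (Gam n) by case: (hlat n).
have Gam_disc n : is_discrete (Gam n) by case: (hlat n).
split; first exact: odo_free_center_trivial Gam_sub hX.
exact: center_trivial_odo_free Gam_sub Gam_disc hnest hinv.
Qed.
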